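(* Let $f \in \mathbb{R}[\bar X, \bar Y]$, $\bar X=(X_1,\dots,X_n)$, $\bar Y=(Y_1,\dots,Y_r)$, with $\deg_{\bar X} f = d$ and $\deg_{\bar Y} f = m$. Then for every $\bar x_1, \bar x_2 \in \widetilde\Delta_n$ and every $(\bar y, z)\in C^r$, $$|\bar f(\bar x_1, \bar y, z) - \bar f(\bar x_2, \bar y, z)| \le \frac12 \sqrt{n}\, \|f\|_\bullet \binom{m+r}{r} d(d+1)\, \|\bar x_1 - \bar x_2\|,$$ where $\|\cdot\|$ on $\mathbb{R}^n$ is the Euclidean norm.
   Context: $\widetilde\Delta_n = \{\bar x\in\mathbb{R}^n \mid \sum_i x_i \le 1,\ x_i\ge 0 \text{ for } 1\le i\le n\}$. $C^r = \{(\bar y, z)\in\mathbb{R}^{r+1} \mid y_1^2+\dots+y_r^2+z^2 = 1\}$. For $f = \sum_{\beta\in\mathbb{N}_0^r, |\beta|\le m} f_\beta(\bar X)\bar Y^\beta$ with $\deg_{\bar Y} f = m$, $\bar f = \sum_{|\beta|\le m} f_\beta(\bar X)\bar Y^\beta Z^{m-|\beta|}$ is its homogenization with respect to $\bar Y$ only. The norm $\|\cdot\|_\bullet$: writing $f = \sum_{|\beta|\le m}\sum_{\alpha\in\mathbb{N}_0^n, |\alpha|\le d}\binom{|\alpha|}{\alpha} a_{\alpha,\beta}\bar X^\alpha \bar Y^\beta$, where $|\alpha|=\alpha_1+\dots+\alpha_n$ and $\binom{|\alpha|}{\alpha} = \frac{|\alpha|!}{\alpha_1!\cdots\alpha_n!}$,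 set $\|f\|_\bullet = \max |a_{\alpha,\beta}|$. *)

From HB Require Import structures.
From mathcomp Require Import all_boot all_order all_algebra.
From mathcomp Require Import reals.
From mathcomp Require Import mpoly.
Set Implicit Arguments. Unset Strict Implicit. Unset Printing Implicit Defensive.
Import Order.TTheory GRing.Theory Num.Theory.
Local Open Scope ring_scope.

(* Polynomials in R[X_1..X_n, Y_1..Y_r] are mpolys in n + r variables:
   variable lshift r i (i < n) is X_(i+1), variable rshift n j (j < r) is Y_(j+1). *)

Section Defs.
Variables (R : realType) (n r : nat).

Definition degXm (mo : 'X_{1..n + r}) : nat := (\sum_(i < n) mo (lshift r i))%N.
Definition degYm (mo : 'X_{1..n + r}) : nat := (\sum_(j < r) mo (rshift n j))%N.

Definition degX (f : {mpoly R[n + r]}) : nat := (\max_(mo <- msupp f) degXm mo)%N.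
Definition degY (f : {mpoly R[n + r]}) : nat := (\max_(mo <- msupp f) degYm mo)%N.

Definition multinomX (mo : 'X_{1..n + r}) : nat :=
  ((degXm mo)`! %/ \prod_(i < n) (mo (lshift r i))`!)%N.

(* ||f||_bullet = max |a_{alpha,beta}|, f = sum binom(|alpha|,alpha) a_{alpha,beta} X^alpha Y^beta *)
Definition bnorm (f : {mpoly R[n + r]}) : R :=
  \big[Num.max/0]_(mo <- msupp f) `|f@_mo / (multinomX mo)%:R|.

(* evaluation of the homogenization of f with respect to Y only:
   bar f(x, y, z) = sum f_beta(x) y^beta z^(m - |beta|), m = deg_Y f *)
Definition homY_eval (f : {mpoly R[n + r]}) (x : 'I_n -> R) (y : 'I_r -> R) (z : R) : R :=
  \sum_(mo <- msupp f)
    f@_mo * (\prod_(i < n) x i ^+ mo (lshift r i))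
          * (\prod_(j < r) y j ^+ mo (rshift n j))
          * z ^+ (degY f - degYm mo).

End Defs.

Definition in_simplex (R : realType) (n : nat) (x : 'I_n -> R) : Prop :=
  (forall i, 0 <= x i) /\ \sum_(i < n) x i <= 1.

Definition in_sphere (R : realType) (r : nat) (y : 'I_r -> R) (z : R) : Prop :=
  \sum_(j < r) y j ^+ 2 + z ^+ 2 = 1.

Definition eucl_norm (R : realType) (n : nat) (x : 'I_n -> R) : R :=
  Num.sqrt (\sum_(i < n) x i ^+ 2).

From HB Require Import structures.
From mathcomp Require Import all_boot all_order all_algebra.
From mathcomp Require Import reals.
From mathcomp Require Import mpoly.
From mathcomp Require Import ring lra.
Import Order.TTheory GRing.Theory Num.Theory.
Local Open Scope ring_scope.
Set Implicit Arguments. Unset Strict Implicit.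

(* Write f = sum_(alpha, beta) c_(alpha,beta) X^alpha Y^beta.  On the sphere
   |y^beta z^(m-|beta|)| <= 1, and |c_(alpha,beta)| <= ||f||_bullet * multinom alpha,
   so the difference is bounded by ||f||_bullet times
       sum_beta sum_(k <= d) sum_(|alpha| = k) multinom alpha * |x1^alpha - x2^alpha|.
   The inner sum is bounded by a sum over all words of length k in the n
   variables (a word w contributes the monomial counting its letters; each
   alpha arises from exactly multinom alpha words), and for points of the
   simplex a telescoping argument bounds this word sum by k * ||x1 - x2||_1.
   Summing k over 0..d gives d(d+1)/2; there are at most binom(m+r, r)
   exponents beta with |beta| <= m (the library's count of bounded
   partitions); finally ||.||_1 <= sqrt n * ||.||_2 by Cauchy-Schwarz. *)

Section SumComparison.
Variable R : numDomainType.

Lemma ler_sum_subset_uniq (T : eqType) (s t : seq T) (g : T -> R) :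
  uniq s -> {subset s <= t} -> (forall x, x \in t -> 0 <= g x) ->
  \sum_(x <- s) g x <= \sum_(x <- t) g x.
Proof.
elim: s t => [|a s IH] t /= s_uniq s_t g_ge0.
  by rewrite big_nil big_seq sumr_ge0.
case/andP: s_uniq => a_notin_s s_uniq.
have a_t : a \in t by apply: s_t; rewrite mem_head.
rewrite big_cons (perm_big _ (perm_to_rem a_t)) big_cons lerD2l.
apply: IH => // [x x_s|x /mem_rem]; last exact: g_ge0.
apply: rem_mem; last by apply: s_t; rewrite inE x_s orbT.
by apply: contraNneq a_notin_s => <-.
Qed.

Lemma ler_sum_partition (T K : eqType) (s : seq T) (L : seq K) (key : T -> K)
    (g : T -> R) :
  (forall x, x \in s -> key x \in L) -> (forall x, x \in s -> 0 <= g x) ->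
  \sum_(x <- s) g x <= \sum_(b <- L) \sum_(x <- s | key x == b) g x.
Proof.
move=> key_L g_ge0; rewrite (exchange_big_dep xpredT) //=.
rewrite [leRHS]big_seq_cond [leLHS]big_seq_cond; apply: ler_sum => x /andP[x_s _].
rewrite big_const_seq.
have : (0 < count (fun b => key x == b) L)%N.
  by rewrite -has_count; apply/hasP; exists (key x); rewrite ?key_L.
case: (count _ L) => // c _ /=; rewrite lerDl.
by elim: c => //= c IHc; rewrite addr_ge0 ?g_ge0.
Qed.

End SumComparison.

Section WordSums.
Variables (R : numDomainType) (n : nat).
Local Notation expo := {ffun 'I_n -> nat}.
Implicit Types (a : expo) (v : 'I_n -> R) (h : expo -> R).

Definition expo0 : expo := [ffun => 0%N].
Definition expo_inc a i : expo := [ffun j => (a j + (j == i))%N].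
Definition expo_dec a i : expo := [ffun j => (a j - (j == i))%N].
Definition expo_deg a : nat := (\sum_j a j)%N.
Definition expo_eval v a : R := \prod_j v j ^+ a j.

(* word_sum k h is the sum, over all words of length k in the letters 'I_n,
   of h applied to the letter-count vector of the word. *)
Fixpoint word_sum (k : nat) h : R :=
  if k is k'.+1 then \sum_(i < n) word_sum k' (fun a => h (expo_inc a i))
  else h expo0.

Lemma ler_word_sum k h g : (forall a, h a <= g a) -> word_sum k h <= word_sum k g.
Proof.
elim: k h g => [|k IH] h g hg /=; first exact: hg.
by apply: ler_sum => i _; apply: IH.
Qed.

Lemma eq_word_sum k h g : h =1 g -> word_sum k h = word_sum k g.
Proof.
elim: k h g => [|k IH] h g hg /=; first exact: hg.
by apply: eq_bigr => i _; apply: IH.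
Qed.

Lemma word_sumD k h g : word_sum k (fun a => h a + g a) = word_sum k h + word_sum k g.
Proof.
elim: k h g => [|k IH] h g //=.
by rewrite -big_split; apply: eq_bigr => i _; rewrite IH.
Qed.

Lemma word_sumZ k c h : word_sum k (fun a => c * h a) = c * word_sum k h.
Proof.
elim: k h => [|k IH] h //=.
by rewrite mulr_sumr; apply: eq_bigr => i _; rewrite IH.
Qed.

Lemma expo_eval0 v : expo_eval v expo0 = 1.
Proof. by rewrite /expo_eval big1 // => j _; rewrite ffunE expr0. Qed.

Lemma expo_eval_inc v a i : expo_eval v (expo_inc a i) = v i * expo_eval v a.
Proof.
rewrite /expo_eval; under eq_bigr => j _ do rewrite ffunE exprD.
rewrite big_split /= mulrC; congr (_ * _).
by rewrite (bigD1 i) //= eqxx expr1 big1 ?mulr1 // => j /negbTE ->.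
Qed.

Lemma expo_eval_ge0 v a : (forall i, 0 <= v i) -> 0 <= expo_eval v a.
Proof. by move=> v_ge0; apply: prodr_ge0 => i _; apply: exprn_ge0. Qed.

Lemma word_sum_eval k v : word_sum k (expo_eval v) = (\sum_i v i) ^+ k.
Proof.
elim: k => [|k IH] /=; first by rewrite expo_eval0 expr0.
rewrite exprS mulr_suml; apply: eq_bigr => i _.
rewrite (eq_word_sum _ (g := fun a => v i * expo_eval v a)) ?word_sumZ ?IH //.
by move=> a; rewrite expo_eval_inc.
Qed.

Lemma word_sum_eval_dist k u v :
  (forall i, 0 <= u i) -> (forall i, 0 <= v i) ->
  \sum_i u i <= 1 -> \sum_i v i <= 1 ->
  word_sum k (fun a => `|expo_eval u a - expo_eval v a|)
    <= k%:R * \sum_i `|u i - v i|.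
Proof.
move=> u_ge0 v_ge0 u_le1 v_le1; set S := \sum_i `|u i - v i|.
have S_ge0 : 0 <= S by apply: sumr_ge0.
elim: k => [|k IH] /=; first by rewrite !expo_eval0 subrr normr0 mul0r.
apply: (@le_trans _ _ (\sum_i (u i * (k%:R * S) + `|u i - v i|))).
  apply: ler_sum => i _.
  pose split_diff a := u i * `|expo_eval u a - expo_eval v a|
                       + `|u i - v i| * expo_eval v a.
  apply: (@le_trans _ _ (word_sum k split_diff)).
    apply: ler_word_sum => a; rewrite !expo_eval_inc.
    have -> : u i * expo_eval u a - v i * expo_eval v a =
              u i * (expo_eval u a - expo_eval v a) + (u i - v i) * expo_eval v a.
      by rewrite mulrBr mulrBl addrA subrK.
    apply: (le_trans (ler_normD _ _)).
    by rewrite !normrM (ger0_norm (u_ge0 i)) (ger0_norm (expo_eval_ge0 _ v_ge0)).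
  rewrite word_sumD !word_sumZ word_sum_eval lerD ?ler_wpM2l //.
  by rewrite ler_piMr // exprn_ile1 // sumr_ge0.
rewrite big_split /= -mulr_suml -/S -[k.+1]addn1 natrD mulrDl mul1r lerD2r.
by rewrite ler_piMl // mulr_ge0.
Qed.

End WordSums.

Section Multinomials.
Variables (R : numFieldType) (n : nat).
Local Notation expo := {ffun 'I_n -> nat}.
Implicit Types (a : expo) (h : expo -> R).

Definition expo_fact a : nat := (\prod_j (a j)`!)%N.
Definition multinom a : R := ((expo_deg a)`!)%:R / (expo_fact a)%:R.

Lemma expo_fact_gt0 a : (0 < expo_fact a)%N.
Proof. by apply: prodn_gt0 => j; apply: fact_gt0. Qed.

(* prod_i a_i! <= (sum_i a_i)!, since binom(p+q, p) >= 1. *)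
Lemma expo_fact_le a : (expo_fact a <= (expo_deg a)`!)%N.
Proof.
rewrite /expo_fact /expo_deg.
apply: (big_ind2 (fun p s => p <= s`!)%N) => // p1 s1 p2 s2 le1 le2.
apply: (leq_trans (leq_mul le1 le2)).
have e := bin_fact (leq_addr s2 s1); rewrite [(s1 + s2 - s1)%N]addKn in e.
by rewrite -e leq_pmull // bin_gt0 leq_addr.
Qed.

Lemma multinom_ge0 a : 0 <= multinom a.
Proof. by rewrite divr_ge0. Qed.

Lemma multinom0 : multinom (expo0 n) = 1.
Proof. by rewrite /multinom /expo_fact /expo_deg !big1 ?divr1 // => j _; rewrite ffunE. Qed.

Lemma expo_inc_dec a i : (0 < a i)%N -> expo_inc (expo_dec a i) i = a.
Proof.
move=> a_i_gt0; apply/ffunP => j; rewrite !ffunE.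
by case: eqP => [->|_]; rewrite ?subn0 ?addn0 // subnK.
Qed.

Lemma expo_deg_inc a i : expo_deg (expo_inc a i) = (expo_deg a).+1.
Proof.
rewrite /expo_deg; under eq_bigr => j _ do rewrite ffunE.
rewrite big_split /= -addn1; congr addn.
by rewrite (bigD1 i) //= eqxx big1 // => j /negbTE ->.
Qed.

Lemma expo_deg_dec a i : (0 < a i)%N -> (expo_deg (expo_dec a i)).+1 = expo_deg a.
Proof. by move=> a_i_gt0; rewrite -(expo_deg_inc _ i) expo_inc_dec. Qed.

Lemma expo_fact_dec a i : (0 < a i)%N -> expo_fact a = (a i * expo_fact (expo_dec a i))%N.
Proof.
move=> a_i_gt0; rewrite /expo_fact (bigD1 i) //= [X in _ = (_ * X)%N](bigD1 i) //=.
rewrite ffunE eqxx mulnA; congr (_ * _)%N.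
  by case: (a i) a_i_gt0 => // k _; rewrite subn1 factS.
by apply: eq_bigr => j /negbTE j_i; rewrite ffunE j_i subn0.
Qed.

(* Pascal-type recursion: a word counted by a ends with some letter i. *)
Lemma multinom_rec a : (0 < expo_deg a)%N ->
  multinom a = \sum_(i | (0 < a i)%N) multinom (expo_dec a i).
Proof.
move=> deg_gt0.
have fact_neq0 b : (expo_fact b)%:R != 0 :> R by rewrite pnatr_eq0 -lt0n expo_fact_gt0.
have -> : \sum_(i | (0 < a i)%N) multinom (expo_dec a i) =
          \sum_(i | (0 < a i)%N) ((expo_deg a).-1`!)%:R * (a i)%:R / (expo_fact a)%:R.
  apply: eq_bigr => i a_i_gt0.
  rewrite /multinom -(expo_deg_dec a_i_gt0) /= (expo_fact_dec a_i_gt0) natrM.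
  have a_i_neq0 : (a i)%:R != 0 :> R by rewrite pnatr_eq0 -lt0n.
  by field; rewrite a_i_neq0 fact_neq0.
rewrite -mulr_suml -mulr_sumr.
have -> : \sum_(i | (0 < a i)%N) (a i)%:R = (expo_deg a)%:R :> R.
  rewrite /expo_deg natr_sum [RHS](bigID (fun i => (0 < a i)%N)) /=.
  by rewrite [X in _ + X]big1 ?addr0 // => i; rewrite lt0n negbK => /eqP ->.
move: deg_gt0; rewrite /multinom; case: (expo_deg a) => // k _.
by rewrite factS natrM /=; ring.
Qed.

(* Each exponent a of degree k arises from multinom a words of length k; hence
   summing multinom a * h a over any duplicate-free list of such exponents is
   bounded by the word sum (for h >= 0). *)
Lemma ler_multinom_word_sum k h (A : seq expo) :
  (forall a, 0 <= h a) -> uniq A -> (forall a, a \in A -> expo_deg a = k) ->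
  \sum_(a <- A) multinom a * h a <= word_sum k h.
Proof.
elim: k h A => [|k IH] h A h_ge0 A_uniq A_deg /=.
  apply: (le_trans (ler_sum_subset_uniq (t := [:: expo0 n]) A_uniq _ _)).
  - move=> a a_A; rewrite inE; apply/eqP/ffunP => j; rewrite ffunE.
    by move: (A_deg a a_A) => /eqP; rewrite sum_nat_eq0 => /forallP/(_ j)/eqP.
  - by move=> a _; rewrite mulr_ge0 ?multinom_ge0.
  by rewrite big_seq1 multinom0 mul1r.
rewrite big_seq.
under eq_bigr => a a_A do rewrite multinom_rec ?A_deg // mulr_suml.
rewrite -big_seq (exchange_big_dep xpredT) //=; apply: ler_sum => i _.
rewrite -big_filter.
rewrite (@eq_big_seq _ _ _ _ _ _
           (fun a => multinom (expo_dec a i) * h (expo_inc (expo_dec a i) i))).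
  rewrite -(big_map (fun a => expo_dec a i) xpredT
                    (fun c => multinom c * h (expo_inc c i))).
  apply: IH => // [|c /mapP[a]]; last first.
    by rewrite mem_filter => /andP[a_i a_A] ->; apply: succn_inj; rewrite expo_deg_dec ?A_deg.
  rewrite map_inj_in_uniq ?filter_uniq // => a b.
  rewrite !mem_filter => /andP[a_i _] /andP[b_i _] eq_dec.
  by rewrite -(expo_inc_dec a_i) -(expo_inc_dec b_i) eq_dec.
by move=> a; rewrite mem_filter => /andP[a_i _]; rewrite expo_inc_dec.
Qed.

End Multinomials.

Lemma sum_nat_id_natr (R : numFieldType) (d : nat) :
  \sum_(0 <= k < d.+1) (k%:R : R) = (d * d.+1)%:R / 2.
Proof.
have twice : (d * d.+1 = 2 * 'C(d.+1, 2))%N by rewrite -mul_bin_diag bin1 mulnC.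
by rewrite -natr_sum bin2_sum twice natrM mulrC mulKf ?pnatr_eq0.
Qed.

(* Cauchy-Schwarz against the all-ones vector: ||e||_1 <= sqrt n * ||e||_2. *)
Lemma sum_norm_le_sqrt (R : rcfType) (n : nat) (e : 'I_n -> R) :
  \sum_i `|e i| <= Num.sqrt n%:R * Num.sqrt (\sum_i e i ^+ 2).
Proof.
set S := \sum_i `|e i|; set Q := \sum_i e i ^+ 2.
have S_ge0 : 0 <= S by apply: sumr_ge0.
have Q_ge0 : 0 <= Q by apply: sumr_ge0 => i _; apply: sqr_ge0.
rewrite -sqrtrM // -(ger0_norm S_ge0) -sqrtr_sqr ler_sqrt ?mulr_ge0 //.
(* 0 <= sum_(i,j) (|e_i| - |e_j|)^2 = 2 n Q - 2 S^2 *)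
have : 0 <= \sum_(i < n) \sum_(j < n) (`|e i| - `|e j|) ^+ 2.
  by apply: sumr_ge0 => i _; apply: sumr_ge0 => j _; apply: sqr_ge0.
have -> : \sum_(i < n) \sum_(j < n) (`|e i| - `|e j|) ^+ 2 =
          \sum_(i < n) \sum_(j < n) (e i ^+ 2 + e j ^+ 2 - 2 * (`|e i| * `|e j|)).
  apply: eq_bigr => i _; apply: eq_bigr => j _.
  by rewrite -(real_normK (num_real (e i))) -(real_normK (num_real (e j))); ring.
under eq_bigr => i _ do rewrite sumrB big_split /= sumr_const card_ord -!mulr_sumr.
rewrite sumrB big_split /= sumr_const card_ord -!mulr_sumr sumrMnl -mulr_suml.
rewrite -/S -/Q !mulr_natl expr2 => sum_sq_ge0; lra.
Qed.

Lemma norm_monomial_diff_le (R : numDomainType) (c p1 p2 w1 w2 K : R) :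
  `|c| <= K -> `|w1 * w2| <= 1 ->
  `|c * p1 * w1 * w2 - c * p2 * w1 * w2| <= K * `|p1 - p2|.
Proof.
move=> c_le w_le1.
have -> : c * p1 * w1 * w2 - c * p2 * w1 * w2 = (c * (p1 - p2)) * (w1 * w2) by ring.
rewrite normrM; apply: (le_trans (ler_wpM2l (normr_ge0 _) w_le1)).
by rewrite mulr1 normrM ler_wpM2r.
Qed.

Lemma in_sphere_norm_le1 (R : realType) (r : nat) (y : 'I_r -> R) (z : R) :
  in_sphere y z -> (forall j, `|y j| <= 1) /\ `|z| <= 1.
Proof.
rewrite /in_sphere => sphere.
have sq_le1 (a : R) : a ^+ 2 <= 1 -> `|a| <= 1 by rewrite -real_normK ?num_real // expr_le1.
have sum_ge0 : 0 <= \sum_(j < r) y j ^+ 2 by apply: sumr_ge0 => j _; apply: sqr_ge0.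
split; last by apply: sq_le1; rewrite -sphere lerDr.
move=> j; apply: sq_le1; rewrite -sphere (bigD1 j) //= -addrA lerDl.
by rewrite addr_ge0 ?sqr_ge0 // sumr_ge0 // => i _; apply: sqr_ge0.
Qed.

Section HomogenizationLipschitz.
Variables (R : realType) (n r : nat) (f : {mpoly R[n + r]}).
Local Notation mono := 'X_{1..n + r}.
Implicit Types (mo : mono) (x : 'I_n -> R).

Definition xexp mo : {ffun 'I_n -> nat} := [ffun i => mo (lshift r i)].
Definition yexp mo : r.-tuple 'I_(degY f).+1 := [tuple inord (mo (rshift n j)) | j < r].

(* The set of Y-exponents of total degree at most m, of size binom(r+m, r). *)
Definition yexp_range : {set r.-tuple 'I_(degY f).+1} :=
  [set t : r.-tuple 'I_(degY f).+1 | (\sum_(i <- t) i <= degY f)%N].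

Lemma degXm_le mo : mo \in msupp f -> (degXm mo <= degX f)%N.
Proof. by move=> mo_f; apply: (leq_bigmax_seq _ mo_f). Qed.

Lemma degYm_le mo : mo \in msupp f -> (degYm mo <= degY f)%N.
Proof. by move=> mo_f; apply: (leq_bigmax_seq _ mo_f). Qed.

Lemma yexpE mo j : mo \in msupp f -> (tnth (yexp mo) j : nat) = mo (rshift n j).
Proof.
move=> mo_f; rewrite tnth_mktuple inordK // ltnS.
apply: leq_trans (degYm_le mo_f).
by rewrite /degYm (bigD1 j) //= leq_addr.
Qed.

Lemma yexp_in_range mo : mo \in msupp f -> yexp mo \in yexp_range.
Proof.
move=> mo_f; rewrite inE big_tuple.
under eq_bigr => j _ do rewrite yexpE //.
exact: degYm_le.
Qed.

Lemma mono_eq mo1 mo2 : mo1 \in msupp f -> mo2 \in msupp f ->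
  xexp mo1 = xexp mo2 -> yexp mo1 = yexp mo2 -> mo1 = mo2.
Proof.
move=> mo1_f mo2_f eq_x eq_y; apply/mnmP => i; rewrite -(splitK i).
case: (split i) => [k|j] /=.
  by have := congr1 (fun a : {ffun 'I_n -> nat} => a k) eq_x; rewrite !ffunE.
by rewrite -!yexpE // eq_y.
Qed.

Lemma expo_deg_xexp mo : expo_deg (xexp mo) = degXm mo.
Proof. by apply: eq_bigr => i _; rewrite ffunE. Qed.

Lemma expo_eval_xexp x mo : expo_eval x (xexp mo) = \prod_(i < n) x i ^+ mo (lshift r i).
Proof. by apply: eq_bigr => i _; rewrite ffunE. Qed.

Lemma expo_fact_xexp mo : expo_fact (xexp mo) = (\prod_(i < n) (mo (lshift r i))`!)%N.
Proof. by apply: eq_bigr => i _; rewrite ffunE. Qed.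

Lemma multinomX_gt0 mo : (0 < multinomX mo)%N.
Proof.
by rewrite /multinomX -expo_fact_xexp -expo_deg_xexp divn_gt0 ?expo_fact_gt0 ?expo_fact_le.
Qed.

(* The integer quotient in the definition of multinomX is at most the true
   multinomial coefficient (in fact it is equal). *)
Lemma multinomX_le mo : ((multinomX mo)%:R : R) <= multinom R (xexp mo).
Proof.
rewrite /multinomX /multinom expo_deg_xexp -expo_fact_xexp.
by rewrite ler_pdivlMr ?ltr0n ?expo_fact_gt0 // -natrM ler_nat leq_divM.
Qed.

Lemma coef_le_bnorm mo : mo \in msupp f -> `|f@_mo| <= bnorm f * multinom R (xexp mo).
Proof.
move=> mo_f.
have scaled_le : `|f@_mo / (multinomX mo)%:R| <= bnorm f.
  exact: (le_bigmax_seq 0 mo xpredT (fun mo => `|f@_mo / (multinomX mo)%:R|) mo_f isT).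
have c_neq0 : (multinomX mo)%:R != 0 :> R by rewrite pnatr_eq0 -lt0n multinomX_gt0.
rewrite -(divfK c_neq0 f@_mo) normrM (ger0_norm (ler0n _ _)).
apply: le_trans (ler_wpM2r (ler0n _ _) scaled_le) _.
by rewrite ler_wpM2l ?multinomX_le // bigmax_ge_id.
Qed.

Definition weight x1 x2 mo : R :=
  multinom R (xexp mo) * `|expo_eval x1 (xexp mo) - expo_eval x2 (xexp mo)|.

Lemma weight_ge0 x1 x2 mo : 0 <= weight x1 x2 mo.
Proof. by rewrite mulr_ge0 ?multinom_ge0. Qed.

(* Step 1: on the sphere the Y- and Z-factors have modulus at most 1, and the
   coefficients are controlled by the bullet norm. *)
Lemma homY_eval_diff_le x1 x2 y z :
  (forall j, `|y j| <= 1) -> `|z| <= 1 ->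
  `|homY_eval f x1 y z - homY_eval f x2 y z|
    <= bnorm f * \sum_(mo <- msupp f) weight x1 x2 mo.
Proof.
move=> y_le1 z_le1; rewrite /homY_eval -sumrB mulr_sumr.
apply: (le_trans (ler_norm_sum _ _ _)).
rewrite big_seq [leRHS]big_seq; apply: ler_sum => mo mo_f.
rewrite /weight !expo_eval_xexp mulrA; apply: norm_monomial_diff_le.
  exact: coef_le_bnorm.
rewrite normrM normr_prod normrX mulr_ile1 ?exprn_ge0 ?exprn_ile1 //.
  by apply: prodr_ge0 => j _; rewrite normrX exprn_ge0.
by apply: prodr_ile1 => j _; rewrite normrX exprn_ge0 ?exprn_ile1.
Qed.

(* Step 2: for a fixed Y-exponent, group the monomials by |alpha| = k <= d and
   compare each group with the word sum of length k. *)
Lemma sum_weight_yexp_class x1 x2 b : in_simplex x1 -> in_simplex x2 ->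
  \sum_(mo <- msupp f | yexp mo == b) weight x1 x2 mo
    <= (degX f * (degX f).+1)%:R / 2 * \sum_i `|x1 i - x2 i|.
Proof.
case=> x1_ge0 x1_le1 [x2_ge0 x2_le1]; rewrite -big_filter.
apply: le_trans (ler_sum_partition (L := index_iota 0 (degX f).+1)
                   (key := @degXm n r) _ _) _.
- move=> mo; rewrite mem_filter mem_index_iota ltnS => /andP[_ mo_f].
  exact: degXm_le.
- by move=> mo _; apply: weight_ge0.
rewrite -sum_nat_id_natr mulr_suml; apply: ler_sum => k _.
rewrite -big_filter /weight.
rewrite -(big_map xexp xpredT (fun a => multinom R a * `|expo_eval x1 a - expo_eval x2 a|)).
apply: le_trans (word_sum_eval_dist k x1_ge0 x2_ge0 x1_le1 x2_le1).
apply: ler_multinom_word_sum => [a||a /mapP[mo]]; first exact: normr_ge0.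
- rewrite map_inj_in_uniq ?filter_uniq ?msupp_uniq // => mo1 mo2.
  rewrite !mem_filter => /andP[_ /andP[/eqP yexp1 mo1_f]] /andP[_ /andP[/eqP yexp2 mo2_f]].
  by move=> eq_x; apply: mono_eq; rewrite ?yexp1 ?yexp2.
by rewrite !mem_filter => /andP[/eqP deg_k _] ->; rewrite expo_deg_xexp.
Qed.

(* Step 3: at most binom(m + r, r) Y-exponents occur. *)
Lemma sum_weight_le x1 x2 : in_simplex x1 -> in_simplex x2 ->
  \sum_(mo <- msupp f) weight x1 x2 mo
    <= ('C(degY f + r, r))%:R
       * ((degX f * (degX f).+1)%:R / 2 * \sum_i `|x1 i - x2 i|).
Proof.
move=> x1_simplex x2_simplex.
apply: le_trans (ler_sum_partition (L := enum yexp_range) (key := yexp) _ _) _.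
- by move=> mo mo_f; rewrite mem_enum yexp_in_range.
- by move=> mo _; apply: weight_ge0.
apply: le_trans (ler_sum _ (fun b _ => sum_weight_yexp_class b x1_simplex x2_simplex)) _.
rewrite big_enum /= sumr_const card_partial_ord_partitions addnC.
by rewrite [leRHS]mulr_natl.
Qed.

End HomogenizationLipschitz.

Theorem lemma7 (R : realType) (n r d m : nat) (f : {mpoly R[n + r]})
  (hd : degX f = d) (hm : degY f = m)
  (x1 x2 : 'I_n -> R) (y : 'I_r -> R) (z : R)
  (hx1 : in_simplex x1) (hx2 : in_simplex x2) (hyz : in_sphere y z) :
  `|homY_eval f x1 y z - homY_eval f x2 y z|
    <= 2^-1 * Num.sqrt (n%:R) * bnorm f * ('C(m + r, r))%:R * (d * d.+1)%:R
       * eucl_norm (fun i => x1 i - x2 i).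
Proof.
have [y_le1 z_le1] := in_sphere_norm_le1 hyz.
have bnorm_ge0 : 0 <= bnorm f by apply: bigmax_ge_id.
have l1_le_l2 := sum_norm_le_sqrt (fun i => x1 i - x2 i).
apply: le_trans (homY_eval_diff_le f x1 x2 y_le1 z_le1) _.
apply: le_trans (ler_wpM2l bnorm_ge0 (sum_weight_le f hx1 hx2)) _.
rewrite hd hm -/(eucl_norm _) in l1_le_l2 *.
have -> : 2^-1 * Num.sqrt n%:R * bnorm f * ('C(m + r, r))%:R * (d * d.+1)%:R
            * eucl_norm (fun i => x1 i - x2 i)
          = bnorm f * (('C(m + r, r))%:R * ((d * d.+1)%:R / 2
            * (Num.sqrt n%:R * eucl_norm (fun i => x1 i - x2 i)))) by ring.
by rewrite !ler_wpM2l ?divr_ge0.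
Qed.
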